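(* Let $k$ be a field of characteristic $0$ and $t$ transcendental over $k$. Let $m=\frac{at^2+bt+c}{dt^2+et+f}$ with $a,b,c,d,e,f\in k$, $a,d$ not both zero, $ae=bd$, $af\neq cd$, $b^2\neq 4ac$ and $e^2\neq 4df$. Then $[k(t):k(m)]=2$ and $\sqrt{m}\notin k(t)$. *)

From HB Require Import structures.
From mathcomp Require Import all_boot all_order all_algebra.
Set Implicit Arguments. Unset Strict Implicit. Unset Printing Implicit Defensive.
Import Order.TTheory GRing.Theory Num.Theory.
Local Open Scope ring_scope.

Definition ratfun (k : fieldType) := {fraction {poly k}}.

Definition tK (k : fieldType) : ratfun k := @FracField.tofrac _ ('X : {poly k}).

Definition cK (k : fieldType) (c : k) : ratfun k := @FracField.tofrac _ (c%:P).

Definition evK (k : fieldType) (p : {poly k}) (x : ratfun k) : ratfun k :=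
  (map_poly (@cK k) p).[x].

Definition in_km (k : fieldType) (m x : ratfun k) : Prop :=
  exists p q : {poly k}, evK q m != 0 /\ x = evK p m / evK q m.

Definition ext_degree_is (k : fieldType) (m : ratfun k) (n : nat) : Prop :=
  exists b : 'I_n -> ratfun k,
    (forall x : ratfun k, exists c : 'I_n -> ratfun k,
        (forall i, in_km m (c i)) /\ x = \sum_(i < n) c i * b i) /\
    (forall c : 'I_n -> ratfun k,
        (forall i, in_km m (c i)) -> \sum_(i < n) c i * b i = 0 ->
        forall i, c i = 0).

From HB Require Import structures.
From mathcomp Require Import all_boot all_order all_algebra.
From mathcomp Require Import ring.
Import Order.TTheory GRing.Theory Num.Theory.
Local Open Scope ring_scope.
Set Implicit Arguments. Unset Strict Implicit.

(* Write b = a r and e = d r, so that m = (a s + c) / (d s + f) with s = t^2 + r t.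
   Since af <> cd this Moebius transformation can be inverted, so s lies in k(m)
   and t is a root of X^2 + r X - s over k(m); hence k(t) = k(m) + k(m) t.
   The involution t |-> -r - t fixes s, hence all of k(m), but moves t because
   2 <> 0; so t is not in k(m) and the degree is exactly 2.
   If m = (p/q)^2 with p, q coprime, then p^2 D = N q^2 for the numerator N and
   denominator D of m; as N and D are coprime (af - cd is a polynomial combination
   of them), both are a constant times a square.
   But one of N, D is a genuine quadratic with nonzero discriminant. *)

Local Notation tf := (@FracField.tofrac {poly _}).

Section FractionRepr.
Local Open Scope quotient_scope.

Lemma tofrac_repr (R : idomainType) (x : {fraction R}) :
  exists p q : R, q != 0 /\ x = FracField.tofrac p / FracField.tofrac q.
Proof.
elim/quotW: x => r; exists (\n_r), (\d_r); split; first exact: denom_ratioP.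
have r_tofrac : \pi_(FracField.type R) r * FracField.tofrac \d_r = FracField.tofrac \n_r.
  rewrite [FracField.tofrac _]piE [FracField.tofrac \n_ _]piE [_ * _]piE.
  apply/eqmodP; rewrite /= FracField.equivfE /FracField.mulf.
  by rewrite !numden_Ratio ?mulf_neq0 ?oner_neq0 ?denom_ratioP // !mulr1 mulrC.
by rewrite -r_tofrac mulfK // tofrac_eq0 denom_ratioP.
Qed.

End FractionRepr.

Lemma tofrac_coprime_repr (k : fieldType) (x : {fraction {poly k}}) :
  exists p q : {poly k}, [/\ q != 0, coprimep p q & x = tf p / tf q].
Proof.
have [p [q [q0 ->]]] := tofrac_repr x.
set g := gcdp p q.
have g0 : g != 0 by rewrite gcdp_eq0 negb_and q0 orbT.
have Ep : p = p %/ g * g by rewrite divpK ?dvdp_gcdl.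
have Eq : q = q %/ g * g by rewrite divpK ?dvdp_gcdr.
exists (p %/ g), (q %/ g); split.
- by apply: contraNneq q0 => q'0; rewrite Eq q'0 mul0r.
- by apply: coprimep_div_gcd; rewrite q0 orbT.
- by rewrite {1}Ep {1}Eq !tofracM -mulf_div divff ?mulr1 ?tofrac_eq0.
Qed.

Section QuadraticPolynomials.
Variable k : fieldType.
Implicit Types (a b c la : k) (P : {poly k}).

Definition quad_poly a b c : {poly k} := a%:P * 'X^2 + b%:P * 'X + c%:P.

Lemma coef_quad_poly a b c i : (quad_poly a b c)`_i = [:: c; b; a]`_i.
Proof.
rewrite !coefE; case: i => [|[|[|i]]] /=; rewrite ?mulr0 ?mulr1 ?add0r ?addr0 //.
by rewrite nth_nil.
Qed.

Lemma quad_poly_inj a b c a' b' c' :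
  quad_poly a b c = quad_poly a' b' c' -> [/\ a = a', b = b' & c = c'].
Proof.
move=> E; have coefE i := congr1 (fun P => P`_i) E.
by move: (coefE 2%N) (coefE 1%N) (coefE 0%N); rewrite !coef_quad_poly.
Qed.

Lemma quad_poly_neq0 a b c : b ^+ 2 != 4%:R * a * c -> quad_poly a b c != 0.
Proof.
apply: contraNneq => E.
have [-> -> ->] : [/\ a = 0, b = 0 & c = 0].
  by apply: quad_poly_inj; rewrite E /quad_poly !polyC0 !mul0r !addr0.
by rewrite expr0n mulr0.
Qed.

Lemma size_quad_poly a b c : a != 0 -> size (quad_poly a b c) = 3%N.
Proof.
move=> a0; have aXb0 : a%:P * 'X + b%:P != 0.
  by rewrite -size_poly_eq0 size_MXaddC polyC_eq0 (negPf a0).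
rewrite /quad_poly expr2 mulrA -mulrDl size_MXaddC (negPf aXb0) /=.
by rewrite size_MXaddC polyC_eq0 (negPf a0) /= size_polyC a0.
Qed.

Lemma size2_poly P : size P = 2%N -> P = (P`_1)%:P * 'X + (P`_0)%:P.
Proof.
move=> sP; apply/polyP => i; rewrite !coefE.
case: i => [|[|i]] /=; rewrite ?mulr0 ?mulr1 ?add0r ?addr0 //.
by rewrite nth_default ?sP.
Qed.

Lemma quad_poly_neq_scaled_sqr a b c la P :
  a != 0 -> b ^+ 2 != 4%:R * a * c -> quad_poly a b c != la%:P * P ^+ 2.
Proof.
move=> a0 disc0; apply/negP => /eqP E.
have s3 := size_quad_poly b c a0; rewrite E in s3.
have la0 : la != 0 by apply: contra_eq_neq s3 => ->; rewrite mul0r size_poly0.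
have P0 : P != 0 by apply: contra_eq_neq s3 => ->; rewrite expr0n mulr0 size_poly0.
have sP : size P = 2%N.
  move: s3; rewrite size_mul ?polyC_eq0 ?expf_neq0 // size_polyC la0 /=.
  have := size_exp P 2; case: (size (P ^+ 2)) => // n /= ->.
  by case: (size P) => [|[|[|j]]] //=; rewrite mulnC /= => /eqP; rewrite !eqSS.
have {}E : quad_poly a b c =
           quad_poly (la * P`_1 ^+ 2) (2%:R * la * P`_1 * P`_0) (la * P`_0 ^+ 2).
  rewrite E {1}(size2_poly sP) /quad_poly !expr2 !polyCM polyC_natr; ring.
move: disc0; have [-> -> ->] := quad_poly_inj E.
by move/eqP; apply; ring.
Qed.

Lemma coprimep_quad_poly a c d f r :
  a * f != c * d -> coprimep (quad_poly a (a * r) c) (quad_poly d (d * r) f).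
Proof.
move=> det0; apply/Bezout_coprimepP; exists ((- d)%:P, a%:P) => /=.
have -> : (- d)%:P * quad_poly a (a * r) c + a%:P * quad_poly d (d * r) f =
          (a * f - c * d)%:P.
  by rewrite /quad_poly !polyCM polyCB polyCM polyCN; ring.
by rewrite polyC_eqp1 subr_eq0.
Qed.

End QuadraticPolynomials.

Lemma coprime_sqr_ratio (k : fieldType) (N D p q : {poly k}) :
  coprimep N D -> coprimep p q -> N != 0 -> q != 0 ->
  p ^+ 2 * D = N * q ^+ 2 -> exists la P Q, N = la%:P * P ^+ 2 /\ D = la%:P * Q ^+ 2.
Proof.
move=> copND coppq N0 q0 E.
have p0 : p != 0.
  apply: contra_neq N0 => p0; apply/eqP; move: E; rewrite p0 expr0n mul0r => /esym/eqP.
  by rewrite mulf_eq0 expf_eq0 (negPf q0) andbF orbF.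
have coppq2 : coprimep (p ^+ 2) (q ^+ 2) by rewrite coprimep_expl // coprimep_expr.
have qD : q ^+ 2 %| D.
  have copqp2 : coprimep (q ^+ 2) (p ^+ 2) by rewrite coprimep_sym.
  by rewrite -(Gauss_dvdpr _ copqp2) E dvdp_mull.
have pN : p ^+ 2 %| N by rewrite -(Gauss_dvdpl _ coppq2) -E dvdp_mulr.
have ED := divpK qD; have EN := divpK pN.
set la := N %/ p ^+ 2 in EN *.
have EDla : D %/ q ^+ 2 = la.
  apply: (mulIf (mulf_neq0 (expf_neq0 2 p0) (expf_neq0 2 q0))).
  by rewrite mulrA -(mulrC (p ^+ 2)) -mulrA ED E -EN mulrA.
have la_unit : la %= 1.
  move/coprimepP: copND; apply; first by rewrite -EN dvdp_mulIl.
  by rewrite -ED EDla dvdp_mulIl.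
have sla : (size la <= 1)%N by rewrite (eqp_size la_unit) size_poly1.
exists la`_0, p, q; rewrite -(size1_polyC sla).
by rewrite -{1}EN -{1}ED EDla !(mulrC la).
Qed.

Lemma mobius_solve (F : fieldType) (a c d f m s : F) :
  a * f != c * d -> m * (d * s + f) = a * s + c -> s = (c - m * f) / (m * d - a).
Proof.
move=> det0 E.
have Es : (m * d - a) * s = c - m * f.
  by apply/eqP; rewrite -subr_eq0 -(subrr (a * s + c)) -{1}E; apply/eqP; ring.
have den0 : m * d - a != 0.
  apply: contra_neq det0 => den0.
  have ea : a = m * d by apply/eqP; rewrite eq_sym -subr_eq0 den0.
  have ec : c = m * f by apply/eqP; rewrite -subr_eq0 -Es den0 mul0r.
  by rewrite ea ec; ring.
by rewrite -Es mulrC mulKf.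
Qed.

Lemma common_ratio (k : fieldType) (a b d e : k) :
  (a != 0) || (d != 0) -> a * e = b * d -> exists r, b = a * r /\ e = d * r.
Proof.
have [-> /= d0 ae_bd | a0 _ ae_bd] := eqVneq a 0.
  exists (e / d); split; last by rewrite mulrC divfK.
  by apply/eqP; rewrite mul0r -(mulIr_eq0 _ (mulIf d0)) -ae_bd mul0r.
exists (b / a); split; first by rewrite mulrC divfK.
by apply: (mulfI a0); rewrite ae_bd; field.
Qed.

Section SubfieldGeneratedBy.
Variables (k : fieldType) (m : ratfun k).
Implicit Types (c : k) (x y : ratfun k) (p q : {poly k}).

Lemma cK_inj : injective (@cK k).
Proof. by move=> x y /eqP; rewrite tofrac_eq => /eqP; apply: polyC_inj. Qed.

Lemma cKM (a b : k) : cK (a * b) = cK a * cK b.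
Proof. by rewrite /cK polyCM rmorphM. Qed.

Lemma evKE p x : evK p x = (map_poly (tf \o polyC) p).[x].
Proof. by rewrite /evK; congr (_.[_]); apply: eq_map_poly. Qed.

Lemma evKD p q x : evK (p + q) x = evK p x + evK q x.
Proof. by rewrite !evKE rmorphD hornerD. Qed.

Lemma evKM p q x : evK (p * q) x = evK p x * evK q x.
Proof. by rewrite !evKE rmorphM hornerM. Qed.

Lemma evKN p x : evK (- p) x = - evK p x.
Proof. by rewrite !evKE rmorphN hornerN. Qed.

Lemma evKC c x : evK c%:P x = cK c.
Proof. by rewrite evKE map_polyC hornerC. Qed.

Lemma evKX x : evK 'X x = x.
Proof. by rewrite evKE map_polyX hornerX. Qed.

Lemma in_km_evK p : in_km m (evK p m).
Proof. by exists p, 1; rewrite -polyC1 evKC /cK tofrac1 oner_neq0 divr1. Qed.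

Lemma in_km_cK c : in_km m (cK c).
Proof. by rewrite -(evKC c m); apply: in_km_evK. Qed.

Lemma in_km_self : in_km m m.
Proof. by rewrite -{2}(evKX m); apply: in_km_evK. Qed.

Lemma in_km0 : in_km m 0.
Proof. by rewrite -(tofrac0 {poly k}) -polyC0; apply: in_km_cK. Qed.

Lemma in_km1 : in_km m 1.
Proof. by rewrite -(tofrac1 {poly k}) -polyC1; apply: in_km_cK. Qed.

Lemma in_kmD x y : in_km m x -> in_km m y -> in_km m (x + y).
Proof.
move=> [p [q [q0 ->]]] [p' [q' [q'0 ->]]].
exists (p * q' + p' * q), (q * q'); rewrite (evKM q).
by split; [exact: (mulf_neq0 q0 q'0) | rewrite evKD !evKM (addf_div _ _ q0 q'0)].
Qed.

Lemma in_kmM x y : in_km m x -> in_km m y -> in_km m (x * y).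
Proof.
move=> [p [q [q0 ->]]] [p' [q' [q'0 ->]]].
exists (p * p'), (q * q'); rewrite (evKM q).
by split; [exact: (mulf_neq0 q0 q'0) | rewrite evKM mulf_div].
Qed.

Lemma in_kmN x : in_km m x -> in_km m (- x).
Proof. by move=> [p [q [q0 ->]]]; exists (- p), q; rewrite evKN mulNr. Qed.

Lemma in_kmV x : in_km m x -> in_km m x^-1.
Proof.
move=> [p [q [q0 ->]]]; have [p0|p0] := eqVneq (evK p m) 0.
  by rewrite p0 mul0r invr0; apply: in_km0.
by exists q, p; rewrite invf_div.
Qed.

End SubfieldGeneratedBy.

Ltac in_km_closure :=
  repeat first [ assumption | apply: in_km_cK | apply: in_km_self | apply: in_kmD
               | apply: in_kmN | apply: in_kmM | apply: in_kmV ].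

Section Reflection.
Variables (k : fieldType) (r : k).
Implicit Types (x y m : ratfun k) (p q : {poly k}).

Definition reflection_invariant p := p \Po (- r%:P - 'X) = p.

Definition reflection_fixed x :=
  exists p q, [/\ reflection_invariant p, reflection_invariant q, q != 0 & x = tf p / tf q].

Lemma reflection_invariantD p q :
  reflection_invariant p -> reflection_invariant q -> reflection_invariant (p + q).
Proof. by rewrite /reflection_invariant comp_polyD => -> ->. Qed.

Lemma reflection_invariantM p q :
  reflection_invariant p -> reflection_invariant q -> reflection_invariant (p * q).
Proof. by rewrite /reflection_invariant comp_polyM => -> ->. Qed.

Lemma reflection_invariantC c : reflection_invariant c%:P.
Proof. exact: comp_polyC. Qed.

Lemma reflection_fixed_cK c : reflection_fixed (cK c).
Proof.
exists c%:P, 1; rewrite tofrac1 divr1 -polyC1.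
by split; rewrite ?polyC1 ?oner_neq0 //; apply: reflection_invariantC.
Qed.

Lemma reflection_fixedD x y :
  reflection_fixed x -> reflection_fixed y -> reflection_fixed (x + y).
Proof.
move=> [p [q [ip iq q0 ->]]] [p' [q' [ip' iq' q'0 ->]]].
exists (p * q' + p' * q), (q * q'); split; rewrite ?mulf_neq0 //.
- by apply: reflection_invariantD; apply: reflection_invariantM.
- exact: reflection_invariantM.
by rewrite addf_div ?tofrac_eq0 // tofracD !tofracM.
Qed.

Lemma reflection_fixedM x y :
  reflection_fixed x -> reflection_fixed y -> reflection_fixed (x * y).
Proof.
move=> [p [q [ip iq q0 ->]]] [p' [q' [ip' iq' q'0 ->]]].
exists (p * p'), (q * q'); split; rewrite ?mulf_neq0 //; try exact: reflection_invariantM.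
by rewrite mulf_div !tofracM.
Qed.

Lemma reflection_fixed_evK m p : reflection_fixed m -> reflection_fixed (evK p m).
Proof.
move=> fm; elim/poly_ind: p => [|p c fp].
  by rewrite -polyC0 evKC; apply: reflection_fixed_cK.
rewrite evKD evKM evKX evKC.
by apply: reflection_fixedD; [apply: reflection_fixedM | apply: reflection_fixed_cK].
Qed.

Lemma reflection_fixed_in_km m x : reflection_fixed m -> in_km m x -> reflection_fixed x.
Proof.
move=> fm [p [q [q0 ->]]].
have [A [B [iA iB B0 ->]]] := reflection_fixed_evK p fm.
have [A' [B' [iA' iB' B'0 EA']]] := reflection_fixed_evK q fm.
rewrite EA' in q0 *.
have A'0 : A' != 0 by apply: contraNneq q0 => ->; rewrite tofrac0 mul0r.
exists (A * B'), (B * A'); split; rewrite ?mulf_neq0 //; try exact: reflection_invariantM.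
by rewrite invf_div mulf_div !tofracM.
Qed.

Lemma reflection_fixed_lin_indep x0 x1 : 2%:R != 0 :> k ->
  reflection_fixed x0 -> reflection_fixed x1 -> x0 + x1 * tK k = 0 -> x1 = 0.
Proof.
move=> two0 [A0 [B0 [iA0 iB0 B00 ->]]] [A1 [B1 [iA1 iB1 B10 ->]]] E.
have {}E : A0 * B1 + A1 * 'X * B0 = 0.
  apply/eqP; rewrite -tofrac_eq0; apply/eqP.
  move: E; rewrite mulrAC addf_div ?tofrac_eq0 // => /eqP.
  rewrite mulf_eq0 invr_eq0 mulf_eq0 !tofrac_eq0 (negPf B00) (negPf B10) !orbF.
  by rewrite tofracD !tofracM => /eqP.
have Er : A0 * B1 + A1 * (- r%:P - 'X) * B0 = 0.
  move: (congr1 (comp_poly (- r%:P - 'X)) E).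
  by rewrite comp_polyD !comp_polyM comp_polyX iA0 iB0 iA1 iB1 comp_poly0.
have : A1 * B0 * (2%:R * 'X + r%:P) = 0.
  have -> : A1 * B0 * (2%:R * 'X + r%:P) =
            (A0 * B1 + A1 * 'X * B0) - (A0 * B1 + A1 * (- r%:P - 'X) * B0) by ring.
  by rewrite E Er subr0.
have lin0 : 2%:R * 'X + r%:P != 0.
  apply: contra_neq two0 => /(congr1 (fun P : {poly k} => P`_1)).
  by rewrite coef0 !coefE /= addr0.
move/eqP; rewrite !mulf_eq0 (negPf B00) (negPf lin0) !orbF => /eqP ->.
by rewrite tofrac0 mul0r.
Qed.

End Reflection.

Section QuadraticGenerator.
Variables (k : fieldType) (m r g : ratfun k).
Local Notation t := (tK k).
Hypotheses (r_in : in_km m r) (g_in : in_km m g).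
Hypothesis t_root : t ^+ 2 + r * t + g = 0.
Hypothesis t_lin_indep :
  forall x0 x1, in_km m x0 -> in_km m x1 -> x0 + x1 * t = 0 -> x1 = 0.

Definition in_km_span x := exists x0 x1, [/\ in_km m x0, in_km m x1 & x = x0 + x1 * t].

Lemma t_sqr : t ^+ 2 = - r * t - g.
Proof. by apply/eqP; rewrite -subr_eq0 -t_root; apply/eqP; ring. Qed.

Lemma in_km_span_cK c : in_km_span (cK c).
Proof. by exists (cK c), 0; rewrite mul0r addr0; split; [apply: in_km_cK | apply: in_km0 |]. Qed.

Lemma in_km_span_t : in_km_span t.
Proof. by exists 0, 1; rewrite mul1r add0r; split; [apply: in_km0 | apply: in_km1 |]. Qed.

Lemma in_km_spanD x y : in_km_span x -> in_km_span y -> in_km_span (x + y).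
Proof.
move=> [x0 [x1 [x0k x1k ->]]] [y0 [y1 [y0k y1k ->]]].
by exists (x0 + y0), (x1 + y1); split; [apply: in_kmD | apply: in_kmD | ring].
Qed.

Lemma in_km_spanM x y : in_km_span x -> in_km_span y -> in_km_span (x * y).
Proof.
move=> [x0 [x1 [x0k x1k ->]]] [y0 [y1 [y0k y1k ->]]].
exists (x0 * y0 - x1 * y1 * g), (x0 * y1 + x1 * y0 - r * x1 * y1).
split; try by in_km_closure.
have -> : (x0 + x1 * t) * (y0 + y1 * t) =
          x0 * y0 + (x0 * y1 + x1 * y0) * t + x1 * y1 * t ^+ 2 by ring.
by rewrite t_sqr; ring.
Qed.

(* Multiplying by the conjugate [x0 - r x1 - x1 t] yields the norm, which lies in k(m). *)
Lemma in_km_spanV x : in_km_span x -> in_km_span x^-1.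
Proof.
have [->|x_neq0] := eqVneq x 0; first by rewrite invr0.
move=> [x0 [x1 [x0k x1k Ex]]].
set z := x0 - r * x1 - x1 * t.
set nx := x0 ^+ 2 - r * x0 * x1 + x1 ^+ 2 * g.
have Exz : x * z = nx.
  have -> : x * z = x0 ^+ 2 - r * x0 * x1 - r * x1 ^+ 2 * t - x1 ^+ 2 * t ^+ 2.
    by rewrite Ex /z; ring.
  by rewrite t_sqr /nx; ring.
have z0 : z != 0.
  apply/eqP => z0; have x1_0 : x1 = 0.
    apply/eqP; rewrite -oppr_eq0; apply/eqP.
    by apply: (t_lin_indep (x0 := x0 - r * x1)); rewrite ?mulNr //; in_km_closure.
  move: z0; rewrite /z x1_0 !(mul0r, mulr0, subr0) => x0_0.
  by move: x_neq0; rewrite Ex x0_0 x1_0 mul0r addr0 eqxx.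
have nx0 : nx != 0 by rewrite -Exz (mulf_neq0 x_neq0 z0).
have -> : x^-1 = z / nx.
  by apply: (mulfI x_neq0); rewrite mulrA Exz (divff nx0) (mulfV x_neq0).
exists ((x0 - r * x1) / nx), (- x1 / nx).
by split; [in_km_closure | in_km_closure | rewrite /z; ring].
Qed.

Lemma in_km_span_tofrac p : in_km_span (tf p).
Proof.
elim/poly_ind: p => [|p c span_p]; first by rewrite -polyC0; apply: in_km_span_cK.
rewrite tofracD tofracM; apply: in_km_spanD; last exact: in_km_span_cK.
exact: in_km_spanM span_p in_km_span_t.
Qed.

Lemma in_km_span_all x : in_km_span x.
Proof.
have [p [q [_ _ ->]]] := tofrac_coprime_repr x.
by apply: in_km_spanM; [|apply: in_km_spanV]; apply: in_km_span_tofrac.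
Qed.

Lemma ext_degree2_of_root : ext_degree_is m 2.
Proof.
exists (fun i : 'I_2 => t ^+ i); split.
  move=> x; have [x0 [x1 [x0k x1k ->]]] := in_km_span_all x.
  exists (fun i : 'I_2 => if val i == 0%N then x0 else x1); split.
    by move=> i; case: ifP.
  by rewrite !big_ord_recl big_ord0 /= expr0 expr1 mulr1 addr0.
move=> c c_in; rewrite !big_ord_recl big_ord0 /= expr0 expr1 mulr1 addr0 => E.
have c1 := t_lin_indep (c_in ord0) (c_in _) E.
have c0 : c ord0 = 0 by move: E; rewrite c1 mul0r addr0.
by case=> [[|[|j]] lt_j2] //; [rewrite -c0 | rewrite -c1]; congr c; apply: val_inj.
Qed.

End QuadraticGenerator.

Section QuadraticRatio.
Variables (k : fieldType) (a c d f r : k).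
Local Notation N := (quad_poly a (a * r) c).
Local Notation D := (quad_poly d (d * r) f).
Local Notation t := (tK k).

Lemma tofrac_quad_poly (x y z : k) : tf (quad_poly x y z) = cK x * t ^+ 2 + cK y * t + cK z.
Proof. by rewrite /quad_poly !tofracD !tofracM -expr2. Qed.

Lemma reflection_invariant_quad_poly (x y : k) : reflection_invariant r (quad_poly x (x * r) y).
Proof.
rewrite /reflection_invariant /quad_poly !expr2 !comp_polyD !comp_polyM !comp_polyC.
by rewrite comp_polyX polyCM; ring.
Qed.

Lemma quad_ratio_not_square :
  (a != 0) || (d != 0) -> a * f != c * d ->
  (a * r) ^+ 2 != 4%:R * a * c -> (d * r) ^+ 2 != 4%:R * d * f ->
  ~ exists y, y ^+ 2 = tf N / tf D.
Proof.
move=> ad0 det0 discN discD [y].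
have [p [q [q0 copq ->]]] := tofrac_coprime_repr y.
have N0 := quad_poly_neq0 discN; have D0 := quad_poly_neq0 discD.
rewrite expr_div_n => /eqP; rewrite eqr_div ?expf_neq0 ?tofrac_eq0 //.
rewrite -!tofracXn -!tofracM tofrac_eq => /eqP E.
have [la [P [Q [EN ED]]]] := coprime_sqr_ratio (coprimep_quad_poly r det0) copq N0 q0 E.
by case/orP: ad0 => [a0|d0]; [move: EN | move: ED]; apply/eqP; apply: quad_poly_neq_scaled_sqr.
Qed.

Lemma ext_degree_quad_ratio :
  2%:R != 0 :> k -> a * f != c * d -> D != 0 -> ext_degree_is (tf N / tf D) 2.
Proof.
move=> two0 det0 D0; set m := tf N / tf D; set s := t ^+ 2 + cK r * t.
have tf_quad x y : tf (quad_poly x (x * r) y) = cK x * s + cK y.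
  by rewrite tofrac_quad_poly cKM /s; ring.
have s_in : in_km m s.
  rewrite (@mobius_solve _ (cK a) (cK c) (cK d) (cK f) m s); first by in_km_closure.
    by rewrite -!cKM (inj_eq (@cK_inj k)).
  by rewrite -!tf_quad /m divfK ?tofrac_eq0.
have m_fixed : reflection_fixed r m.
  by exists N, D; split=> //; apply: reflection_invariant_quad_poly.
apply: (@ext_degree2_of_root _ m (cK r) (- s)); first exact: in_km_cK.
- exact: in_kmN.
- by rewrite /s; ring.
move=> x0 x1 x0_in x1_in; apply: reflection_fixed_lin_indep two0 _ _;
  exact: reflection_fixed_in_km m_fixed _.
Qed.

End QuadraticRatio.

Unset Implicit Arguments. Set Strict Implicit.

Theorem lemma2p4 (k : fieldType) (a b c d e f : k) :
  [pchar k] =i pred0 ->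
  (a != 0) || (d != 0) ->
  a * e = b * d ->
  a * f != c * d ->
  b ^+ 2 != 4%:R * a * c ->
  e ^+ 2 != 4%:R * d * f ->
  let m : ratfun k :=
    (cK a * tK k ^+ 2 + cK b * tK k + cK c) /
    (cK d * tK k ^+ 2 + cK e * tK k + cK f) in
  ext_degree_is m 2 /\ ~ (exists y : ratfun k, y ^+ 2 = m).
Proof.
move=> char0 ad0 ae_bd det0 discN discD m.
have two0 : 2%:R != 0 :> k by rewrite (pcharf0P _).1.
have [r [Eb Ee]] := common_ratio ad0 ae_bd; subst b e.
rewrite /m -!tofrac_quad_poly; split.
  exact/ext_degree_quad_ratio/quad_poly_neq0.
exact: quad_ratio_not_square.
Qed.
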